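(* Let $p$ be a prime, let $q:\mathbb{F}_p^n\to\mathbb{F}_p$ be a quadratic form and let $b:\mathbb{F}_p^n\times\mathbb{F}_p^n\to\mathbb{F}_p$ be a bilinear form such that $q(x)=b(x,x)$ for every $x\in\mathbb{F}_p^n$. Then $\mathrm{erk}\,q\le\mathrm{erk}\,b$.
   Context: The essential rank of the quadratic form $q$ is $\mathrm{erk}\,q=\min\mathrm{rk}(q+q_\Delta)$ over all diagonal quadratic forms $q_\Delta(x)=\sum_i a_ix_i^2$, where for a polynomial $Q$ of degree $2$, $\mathrm{rk}\,Q$ is the least $k$ such that $Q=\sum_{i=1}^k Q_iR_i$ with polynomials $Q_i,R_i$ of degree at most $1$ (and $\mathrm{rk}$ of a polynomial of degree at most $1$ is defined via the degree-$\le1$ conventions; here we use the degree-2 rank). The essential (partition) rank of the bilinear form $b$ is $\mathrm{erk}\,b=\min\mathrm{rank}(b+b_\Delta)$ over all diagonal bilinear forms $b_\Delta(x,y)=\sum_i c_ix_iy_i$, where rank is matrix rank. *)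

From HB Require Import structures.
From mathcomp Require Import all_boot all_order all_algebra.
From Stdlib Require Import ClassicalDescription.
Set Implicit Arguments. Unset Strict Implicit. Unset Printing Implicit Defensive.
Import GRing.Theory.
Local Open Scope ring_scope.

Section Forms.
Variables (F : finFieldType) (n : nat).

Definition affine_fun (d : F * 'rV[F]_n) (x : 'rV[F]_n) : F :=
  d.1 + \sum_(i < n) d.2 0 i * x 0 i.

Definition is_quad_form (q : 'rV[F]_n -> F) : Prop :=
  exists c : 'M[F]_n, forall x : 'rV[F]_n,
    q x = \sum_(i < n) \sum_(j < n | (i <= j)%N) c i j * x 0 i * x 0 j.

Definition bform (B : 'M[F]_n) (x y : 'rV[F]_n) : F :=
  \sum_(i < n) \sum_(j < n) x 0 i * B i j * y 0 j.

Definition diag_qf (a : 'rV[F]_n) (x : 'rV[F]_n) : F :=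
  \sum_(i < n) a 0 i * x 0 i ^+ 2.

(* Q = sum_{i<k} Q_i R_i with Q_i, R_i polynomials of degree at most 1
   (identity of functions F^n -> F) *)
Definition rk_le (Q : 'rV[F]_n -> F) (k : nat) : bool :=
  [exists t : {ffun 'I_k -> (F * 'rV[F]_n) * (F * 'rV[F]_n)},
     [forall x : 'rV[F]_n,
        Q x == \sum_(i < k) affine_fun (t i).1 x * affine_fun (t i).2 x]].

(* rk Q = least such k (0 by convention if no such k exists, which never
   happens for the quadratic functions considered here) *)
Definition rk (Q : 'rV[F]_n -> F) : nat :=
  match excluded_middle_informative (exists k, rk_le Q k) with
  | left h => ex_minn h
  | right _ => 0%N
  end.

(* erk q = min over diagonal forms q_Delta of rk (q + q_Delta);
   the seed rk q is the value at a = 0 *)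
Definition erk_q (q : 'rV[F]_n -> F) : nat :=
  \big[minn/(rk q)]_(a : 'rV[F]_n) rk (fun x => q x + diag_qf a x).

Definition erk_b (B : 'M[F]_n) : nat :=
  \big[minn/(\rank B)]_(c : 'rV[F]_n) \rank (B + diag_mx c).

End Forms.

(* For a diagonal c, the form x |-> b(x,x) + sum_i c_i x_i^2 is q + q_Delta for
   the diagonal quadratic form with the same coefficients, and its Gram matrix is
   B + diag c.  A matrix M of rank r factors as U V with U : n x r and V : r x n,
   so x M x^T = sum_(l < r) (x U)_l (x V^T)_l is a sum of r products of linear
   forms; hence rk (q + q_Delta) <= rank (B + diag c) for every c. *)
From mathcomp Require Import all_boot all_order all_algebra.
From Stdlib Require Import ClassicalDescription.

Set Implicit Arguments.
Unset Strict Implicit.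
Unset Printing Implicit Defensive.
Local Open Scope ring_scope.
Import Order.TTheory GRing.Theory.

Section QuadraticRank.
Variables (F : finFieldType) (n : nat).
Implicit Types (Q : 'rV[F]_n -> F) (x y a : 'rV[F]_n) (M : 'M[F]_n).

Lemma bformE M x y : bform M x y = (x *m M *m y^T) 0 0.
Proof.
rewrite /bform mxE exchange_big; apply: eq_bigr => j _.
by rewrite !mxE big_distrl.
Qed.

Lemma affine_fun_row k (A : 'M[F]_(k, n)) l x : affine_fun (0, row l A) x = (A *m x^T) l 0.
Proof. by rewrite /affine_fun add0r mxE; apply: eq_bigr => i _; rewrite !mxE. Qed.

Lemma bform_mulmx k (U : 'M[F]_(n, k)) (V : 'M[F]_(k, n)) x y :
  bform (U *m V) x y = \sum_(l < k) (U^T *m x^T) l 0 * (V *m y^T) l 0.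
Proof.
by rewrite bformE mulmxA -mulmxA mxE; apply: eq_bigr => l _; rewrite -trmx_mul !mxE.
Qed.

Lemma bform_add_diag M a x : bform (M + diag_mx a) x x = bform M x x + diag_qf a x.
Proof.
rewrite !bformE mulmxDr mulmxDl mxE; congr (_ + _).
rewrite mul_mx_diag mxE; apply: eq_bigr => i _.
by rewrite !mxE mulrAC mulrC expr2.
Qed.

Lemma eq_rk_le Q Q' k : Q =1 Q' -> rk_le Q k = rk_le Q' k.
Proof. by move=> eQ; apply: eq_existsb => t; apply: eq_forallb => x; rewrite eQ. Qed.

Lemma rk_le_bform_mulmx k (U : 'M[F]_(n, k)) (V : 'M[F]_(k, n)) :
  rk_le (fun x => bform (U *m V) x x) k.
Proof.
apply/existsP; exists [ffun l => ((0, row l U^T), (0, row l V))].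
apply/forallP => x; rewrite bform_mulmx; apply/eqP/eq_bigr => l _.
by rewrite ffunE !affine_fun_row.
Qed.

Lemma rk_le_bform_rank M : rk_le (fun x => bform M x x) (\rank M).
Proof. by have := rk_le_bform_mulmx (col_base M) (row_base M); rewrite mulmx_base. Qed.

Lemma rk_min Q k : rk_le Q k -> (rk Q <= k)%N.
Proof.
move=> Qk; rewrite /rk; case: excluded_middle_informative => [ex | []]; last by exists k.
by case: ex_minnP => m _; apply.
Qed.

Lemma erk_q_le_rk Q a : (erk_q Q <= rk (fun x => (Q x + diag_qf a x)%R))%N.
Proof. by rewrite /erk_q -minEnat -leEnat; apply: bigmin_le. Qed.

Section EssentialRank.
Variables (Q : 'rV[F]_n -> F) (M : 'M[F]_n).
Hypothesis QM : forall x, Q x = bform M x x.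

Lemma erk_q_le_rank_add_diag a : (erk_q Q <= \rank (M + diag_mx a)%R)%N.
Proof.
have QaM : (fun x => Q x + diag_qf a x) =1 (fun x => bform (M + diag_mx a) x x).
  by move=> x; rewrite bform_add_diag QM.
apply: leq_trans (erk_q_le_rk Q a) (rk_min _).
by rewrite (eq_rk_le _ QaM) rk_le_bform_rank.
Qed.

(* In [erk_b] the argument of [\rank] is read in %MS scope, so [B + diag_mx c]
   there is the row-space sum [addsmx], whose rank dominates that of the matrix sum. *)
Lemma erk_q_le_erk_b : (erk_q Q <= erk_b M)%N.
Proof.
rewrite /erk_b -minEnat -leEnat; apply: le_bigmin => [|a _]; rewrite leEnat.
- by have := erk_q_le_rank_add_diag 0; rewrite raddf0 addr0.
- apply: leq_trans (erk_q_le_rank_add_diag a) (mxrankS _).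
  exact: addmx_sub_adds.
Qed.

End EssentialRank.

End QuadraticRank.

Theorem lemma2p9 (p : nat) (hp : prime p) (n : nat)
  (q : 'rV['F_p]_n -> 'F_p) (B : 'M['F_p]_n) :
  is_quad_form q ->
  (forall x : 'rV['F_p]_n, q x = bform B x x) ->
  (erk_q q <= erk_b B)%N.
Proof.
by move=> _; apply: erk_q_le_erk_b.
Qed.
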